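(* Let $X$ be a real reflexive Banach space and let $\{F_t\}_{t \in T}$ be a non-empty family of convex existence sets in $X$ directed by inclusion, i.e. for any $t_1, t_2 \in T$ there is $t_3 \in T$ with $F_{t_1} \cup F_{t_2} \subset F_{t_3}$. Then $F = \mathrm{cl}\left(\bigcup_{t \in T} F_t\right)$ is an existence set.
   Context: For a non-empty set $F \subset X$ and $x \in X$, let $R_F(x) = \{ d \in F : \|d-c\| \le \|x-c\| \text{ for all } c \in F\}$. A non-empty set $F \subset X$ is an existence set if $R_F(x) \neq \emptyset$ for every $x \in X$. $\mathrm{cl}$ denotes norm closure. *)

From HB Require Import structures.
From mathcomp Require Import all_boot all_order all_algebra.
From mathcomp Require Import all_classical all_reals all_analysis.
Import Order.TTheory GRing.Theory Num.Theory.
Import numFieldNormedType.Exports.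
Local Open Scope classical_set_scope.
Local Open Scope ring_scope.

Section Defs.
Context {R : realType} {X : normedModType R}.

Definition cont_lin_functional (f : X -> R) : Prop :=
  (forall (a : R) (x y : X), f (a *: x + y) = a * f x + f y) /\ continuous f.

Definition dual_linear (phi : (X -> R) -> R) : Prop :=
  forall (a : R) (f g : X -> R), cont_lin_functional f -> cont_lin_functional g ->
    phi (fun x => a * f x + g x) = a * phi f + phi g.

(* phi is bounded w.r.t. the dual norm: |phi f| <= M ||f||_* , where
   ||f||_* <= C  iff  |f x| <= C ||x|| for all x *)
Definition dual_bounded (phi : (X -> R) -> R) : Prop :=
  exists M : R, forall f : X -> R, cont_lin_functional f ->
    forall C : R, 0 <= C -> (forall x : X, `|f x| <= C * `|x|) ->
      `|phi f| <= M * C.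

Definition reflexive_space : Prop :=
  forall phi : (X -> R) -> R, dual_linear phi -> dual_bounded phi ->
    exists x : X, forall f : X -> R, cont_lin_functional f -> phi f = f x.

Definition RF (F : set X) (x : X) : set X :=
  [set d | F d /\ forall c, F c -> `|d - c| <= `|x - c|].

Definition existence_set (F : set X) : Prop :=
  F !=set0 /\ forall x : X, RF F x !=set0.

End Defs.

From HB Require Import structures.
From mathcomp Require Import all_boot all_order all_algebra.
From mathcomp Require Import all_classical all_reals all_analysis.
From mathcomp Require Import ring lra.
Import Order.TTheory GRing.Theory Num.Theory.
Import numFieldNormedType.Exports.
Local Open Scope classical_set_scope.
Local Open Scope ring_scope.

(* Fix x and choose d_t in R_{F_t}(x) for each t.  The net (d_t), indexed by
   the family directed by inclusion, is bounded, so along an ultrafilter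
   refining its tail filter the limits of f(d_t), f in X*, define an element
   of X**, which reflexivity realises as a point d: a weak limit of the net.
   Testing against norming functionals (Hahn-Banach) gives
   ||d - c|| <= ||x - c|| for c in the union, hence for c in its closure.  And
   d lies in the closure: the union is convex, and a point at positive
   distance from a convex set is strictly separated from it by a continuous
   functional, which would contradict the weak convergence. *)

Set Implicit Arguments.
Unset Strict Implicit.
Unset Printing Implicit Defensive.

Section Subspaces.
Variables (R : fieldType) (V : lmodType R).

Definition subspace (D : set V) :=
  D 0 /\ forall a x y, D x -> D y -> D (a *: x + y).

Definition linear_on (D : set V) (g : V -> R) :=
  forall a x y, D x -> D y -> g (a *: x + y) = a * g x + g y.

Definition linear_functional (f : V -> R) :=
  forall a x y, f (a *: x + y) = a * f x + f y.

Definition span_with (D : set V) (w : V) := [set z | exists l, D (z - l *: w)].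

Lemma subspaceT : subspace setT.
Proof. by split. Qed.

Lemma subspace0 : subspace [set 0].
Proof. by split => // a x y -> ->; rewrite scaler0 addr0. Qed.

Lemma subspaceZ D a x : subspace D -> D x -> D (a *: x).
Proof. by move=> [D0 DD] Dx; rewrite -[_ *: _]addr0; apply: DD. Qed.

Lemma subspaceD D x y : subspace D -> D x -> D y -> D (x + y).
Proof. by move=> [D0 DD] Dx Dy; rewrite -[x]scale1r; apply: DD. Qed.

Lemma subspaceB D x y : subspace D -> D x -> D y -> D (x - y).
Proof.
by move=> sD Dx Dy; rewrite -scaleN1r; apply: subspaceD => //; apply: subspaceZ.
Qed.

Lemma linear_on0 D g : subspace D -> linear_on D g -> g 0 = 0.
Proof.
move=> [D0 _] lg; have := lg 1 0 0 D0 D0; rewrite scale1r addr0 mul1r => h.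
by apply/eqP; rewrite -(subrr (g 0)) {2}h addrK.
Qed.

Lemma linear_onZ D g a x : subspace D -> linear_on D g -> D x ->
  g (a *: x) = a * g x.
Proof.
move=> sD lg Dx; have := lg a x 0 Dx sD.1.
by rewrite addr0 (linear_on0 sD lg) addr0.
Qed.

Lemma linear_onD D g x y : linear_on D g -> D x -> D y ->
  g (x + y) = g x + g y.
Proof. by move=> lg Dx Dy; have := lg 1 x y Dx Dy; rewrite scale1r mul1r. Qed.

Lemma linear_functional_on D f : linear_functional f -> linear_on D f.
Proof. by move=> lf a x y _ _; apply: lf. Qed.

Lemma linear_functional0 f : linear_functional f -> f 0 = 0.
Proof.
by move=> lf; apply: linear_on0 subspaceT (linear_functional_on lf).
Qed.

Lemma linear_functionalZ f a x : linear_functional f -> f (a *: x) = a * f x.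
Proof.
by move=> lf; apply: linear_onZ subspaceT (linear_functional_on lf) _.
Qed.

Lemma linear_functionalD f x y : linear_functional f -> f (x + y) = f x + f y.
Proof. by move=> lf; apply: linear_onD (linear_functional_on lf) _ _. Qed.

Lemma linear_functionalB f x y : linear_functional f -> f (x - y) = f x - f y.
Proof.
move=> lf; rewrite -scaleN1r -[x]scale1r lf linear_functionalZ //.
by rewrite mul1r mulN1r scale1r.
Qed.

Lemma scale_combB a l m (x y w : V) :
  a *: x + y - (a * l + m) *: w = a *: (x - l *: w) + (y - m *: w).
Proof. by rewrite scalerBr scalerA addrACA -opprD -scalerDl. Qed.

Lemma subspace_span_with D w : subspace D -> subspace (span_with D w).
Proof.
move=> sD; split; first by exists 0; rewrite scale0r subr0; apply: sD.1.
move=> a x y [l Dx] [m Dy]; exists (a * l + m).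
by rewrite scale_combB; apply: sD.2.
Qed.

Lemma sub_span_with D w : D `<=` span_with D w.
Proof. by move=> x Dx; exists 0; rewrite scale0r subr0. Qed.

Lemma span_with_vector D w : subspace D -> span_with D w w.
Proof. by move=> sD; exists 1; rewrite scale1r subrr; apply: sD.1. Qed.

Lemma span_with_coord_unique D w z l m : subspace D -> ~ D w ->
  D (z - l *: w) -> D (z - m *: w) -> l = m.
Proof.
move=> sD Dw Dl Dm; apply: contrapT => /eqP lm; apply: Dw.
have : D ((l - m) *: w).
  have -> : (l - m) *: w = (z - m *: w) - (z - l *: w).
    by rewrite scalerBl opprB [RHS]addrC addrA subrK.
  exact: subspaceB.
move=> /(subspaceZ (l - m)^-1 sD).
by rewrite scalerA mulVf ?scale1r // subr_eq0.
Qed.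

End Subspaces.

Section HahnBanach.
Variables (R : realType) (V : lmodType R) (p : V -> R).
Hypothesis p0 : p 0 = 0.
Hypothesis pD : forall x y, p (x + y) <= p x + p y.
Hypothesis pZ : forall a x, 0 < a -> p (a *: x) <= a * p x.

Lemma ge_sublinearZ a x : 0 < a -> a * p x <= p (a *: x).
Proof.
move=> a0; have ia0 : 0 < a^-1 by rewrite invr_gt0.
have := pZ (a *: x) ia0; rewrite scalerA mulVf ?gt_eqF // scale1r => h.
by rewrite -(ler_pM2l ia0) mulrA mulVf ?gt_eqF // mul1r.
Qed.

Definition dominated_on (D : set V) (g : V -> R) := forall x, D x -> g x <= p x.

Definition partial_dominated (e : set V * (V -> R)) :=
  [/\ subspace e.1, linear_on e.1 e.2 & dominated_on e.1 e.2].

Definition extends (e e' : set V * (V -> R)) :=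
  e.1 `<=` e'.1 /\ forall x, e.1 x -> e'.2 x = e.2 x.

Lemma extends_refl e : extends e e.
Proof. by split. Qed.

Lemma extends_trans e1 e2 e3 : extends e1 e2 -> extends e2 e3 -> extends e1 e3.
Proof.
move=> [s12 e12] [s23 e23]; split => [x /s12/s23 //|x x1].
by rewrite e23 ?e12 //; apply: s12.
Qed.

Lemma exists_gap D g w : partial_dominated (D, g) -> exists c,
  (forall y, D y -> g y - p (y - w) <= c) /\
  (forall x, D x -> c <= p (x + w) - g x).
Proof.
move=> [/= sD lg dg]; pose S := [set g y - p (y - w) | y in D].
(* g x + g y = g (x + y) <= p (x + w) + p (y - w) *)
have ubS x : D x -> ubound S (p (x + w) - g x).
  move=> Dx _ [y Dy <-]; have := dg _ (subspaceD sD Dx Dy).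
  rewrite (linear_onD lg Dx Dy).
  have := pD (x + w) (y - w); rewrite addrACA subrr addr0; lra.
have S0 : S !=set0 by exists (g 0 - p (0 - w)), 0 => //; apply: sD.1.
exists (sup S); split => [y Dy|x Dx].
  by apply: sup_upper_bound; [split => //; exists (p (0 + w) - g 0);
    apply: ubS sD.1 | exists y].
exact: ge_sup S0 (ubS x Dx).
Qed.

Lemma dominated_by_gap D g w c x l : partial_dominated (D, g) -> D x ->
  (forall y, D y -> g y - p (y - w) <= c) ->
  (forall y, D y -> c <= p (y + w) - g y) ->
  g x + l * c <= p (x + l *: w).
Proof.
move=> [/= sD lg dg] Dx cl cu.
have [l0|l0|->] := ltgtP l 0; last by rewrite mul0r scale0r !addr0; apply: dg.
- pose m := - l; have m0 : 0 < m by rewrite oppr_gt0.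
  have Dy : D (m^-1 *: x) by apply: subspaceZ.
  have -> : x + l *: w = m *: (m^-1 *: x - w).
    by rewrite scalerBr scalerA mulfV ?gt_eqF // scale1r scaleNr opprK.
  have {1}-> : x = m *: (m^-1 *: x) by rewrite scalerA mulfV ?gt_eqF // scale1r.
  rewrite (linear_onZ _ sD lg Dy); have := cl _ Dy.
  have := ge_sublinearZ (m^-1 *: x - w) m0; rewrite /m; nra.
- have Dy : D (l^-1 *: x) by apply: subspaceZ.
  have -> : x + l *: w = l *: (l^-1 *: x + w).
    by rewrite scalerDr scalerA mulfV ?gt_eqF // scale1r.
  have {1}-> : x = l *: (l^-1 *: x) by rewrite scalerA mulfV ?gt_eqF // scale1r.
  rewrite (linear_onZ _ sD lg Dy); have := cu _ Dy.
  have := ge_sublinearZ (l^-1 *: x + w) l0; nra.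
Qed.

Lemma extend_by_vector D g w c : partial_dominated (D, g) -> ~ D w ->
  (forall y, D y -> g y - p (y - w) <= c) ->
  (forall x, D x -> c <= p (x + w) - g x) ->
  exists g', [/\ partial_dominated (span_with D w, g'),
    extends (D, g) (span_with D w, g') & g' w = c].
Proof.
move=> pd Dw cl cu; have [/= sD lg dg] := pd.
pose lam z := xget 0 [set l | D (z - l *: w)].
have lamE z l : D (z - l *: w) -> lam z = l.
  move=> Dl; have Dlam : D (z - lam z *: w).
    by apply: (@xgetPex _ 0 [set l | D (z - l *: w)]); exists l.
  exact: span_with_coord_unique sD Dw Dlam Dl.
pose g' z := g (z - lam z *: w) + lam z * c.
have g'E z l : D (z - l *: w) -> g' z = g (z - l *: w) + l * c.
  by move=> Dl; rewrite /g' (lamE _ _ Dl).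
exists g'; split; first split => /=.
- exact: subspace_span_with.
- move=> a x y [l Dx] [m Dy].
  have Dxy : D (a *: x + y - (a * l + m) *: w).
    by rewrite scale_combB; apply: sD.2.
  by rewrite (g'E _ _ Dxy) (g'E _ _ Dx) (g'E _ _ Dy) scale_combB lg //; ring.
- move=> z [l Dl]; rewrite (g'E _ _ Dl).
  by have := dominated_by_gap l pd Dl cl cu; rewrite subrK.
- split => [|x Dx]; first exact: sub_span_with.
  by rewrite /= (g'E x 0) ?scale0r ?subr0 ?mul0r ?addr0.
- rewrite (g'E w 1) ?scale1r ?subrr ?mul1r ?(linear_on0 sD lg) ?add0r //.
  exact: sD.1.
Qed.

Lemma partial_dominated_chain_ub (A : set (set V * (V -> R))) :
  A !=set0 -> A `<=` partial_dominated -> total_on A extends ->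
  exists2 e, partial_dominated e & forall a, A a -> extends a e.
Proof.
move=> [a0 Aa0] Apd tot.
pose D := \bigcup_(a in A) a.1.
pose g x := if pselect (exists2 a, A a & a.1 x) is left H
  then (projT1 (cid2 H)).2 x else 0.
have gE a x : A a -> a.1 x -> g x = a.2 x.
  move=> Aa ax; rewrite /g; case: pselect => [H|nH]; last by case: nH; exists a.
  case: (cid2 H) => b /= Ab bx.
  by have [[_ ->]|[_ ->]] := tot _ _ Aa Ab.
have both x y : D x -> D y -> exists2 b, A b & b.1 x /\ b.1 y.
  move=> [a Aa ax] [b Ab bx]; have [[ab _]|[ba _]] := tot _ _ Aa Ab.
    by exists b => //; split => //; apply: ab.
  by exists a => //; split => //; apply: ba.
exists (D, g) => [|a Aa]; last by split => [x ax|x ax]; [exists a | apply: gE].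
split => /=.
- split; first by exists a0 => //; have [[]] := Apd _ Aa0.
  move=> a x y Dx Dy; have [b Ab [bx b'y]] := both _ _ Dx Dy.
  by have [[_ sb] _ _] := Apd _ Ab; exists b => //; apply: sb.
- move=> a x y Dx Dy; have [b Ab [bx b'y]] := both _ _ Dx Dy.
  have [[_ sb] lb _] := Apd _ Ab.
  by rewrite !(gE b) //; [apply: lb | apply: sb].
- move=> x [b Ab bx]; have [_ _ db] := Apd _ Ab.
  by rewrite (gE b) //; apply: db.
Qed.

Lemma partial_dominated_maximal_total e : partial_dominated e ->
  (forall e', partial_dominated e' -> extends e e' -> e'.1 `<=` e.1) ->
  forall x, e.1 x.
Proof.
case: e => D g pd emax x; apply: contrapT => Dx.
have [c [cl cu]] := exists_gap x pd.
have [g' [pd' ext' _]] := extend_by_vector pd Dx cl cu.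
by apply: Dx; apply: (emax _ pd' ext'); apply: span_with_vector; case: pd.
Qed.

Theorem hahn_banach D0 g0 : partial_dominated (D0, g0) -> exists f,
  [/\ linear_functional f, forall x, f x <= p x & forall x, D0 x -> f x = g0 x].
Proof.
move=> pd0; pose T := {e | partial_dominated e /\ extends (D0, g0) e}.
pose le (a b : T) := `[< extends (sval a) (sval b) >].
pose e0 : T := exist _ (D0, g0) (conj pd0 (extends_refl _)).
have [[[D g] [pd ext]] emax] : exists m, premaximal le m.
  apply: (ZL_preorder e0).
  - by move=> a; apply/asboolP/extends_refl.
  - move=> a b c /asboolP ab /asboolP bc.
    by apply/asboolP; apply: extends_trans bc.
  move=> A tot; have [[a Aa]|A0] := pselect (A !=set0); last first.
    by exists e0 => a Aa; exfalso; apply: A0; exists a.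
  have [|||e pd ub] := @partial_dominated_chain_ub (sval @` A).
  - by exists (sval a), a.
  - by move=> _ [b _ <-]; apply: (svalP b).1.
  - move=> _ _ [b Ab <-] [c Ac <-].
    by have [/asboolP|/asboolP] := tot _ _ Ab Ac; [left|right].
  have ext : extends (D0, g0) e.
    by apply: extends_trans (svalP a).2 (ub _ (imageP _ Aa)).
  by exists (exist _ e (conj pd ext)) => b Ab; apply/asboolP/ub; exists b.
have full : forall x, D x.
  apply: (partial_dominated_maximal_total pd) => e' pd' ext'.
  pose m' : T := exist _ e' (conj pd' (extends_trans ext ext')).
  by have /asboolP [] := emax m' (asboolT ext').
have [/= _ lg dg] := pd.
exists g; split => [a x y|x|x D0x]; [exact: lg a x y (full x) (full y) | exact: dg |].
exact: ext.2.
Qed.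

Lemma hahn_banach_at v0 : exists f,
  [/\ linear_functional f, forall x, f x <= p x & f v0 = p v0].
Proof.
have pd0 : partial_dominated ([set 0], fun=> 0).
  split => /=; [exact: subspace0 | by move=> *; rewrite mulr0 addr0 |].
  by move=> x ->; rewrite p0.
have [->|v0n0] := eqVneq v0 0.
  have [f [lf fp _]] := hahn_banach pd0.
  by exists f; rewrite linear_functional0.
have [|||g [pd ext gv]] := extend_by_vector (w := v0) (c := p v0) pd0.
- by move=> /= v00; rewrite v00 eqxx in v0n0.
- by move=> y ->; have := pD v0 (- v0); rewrite subrr p0 /= !sub0r; lra.
- by move=> x ->; rewrite add0r subr0.
have [f [lf fp fg]] := hahn_banach pd.
exists f; split => //; rewrite fg ?gv //.
by apply: (@span_with_vector _ _ [set 0]); apply: subspace0.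
Qed.

End HahnBanach.

Section ContinuousFunctionals.
Variables (R : realType) (X : normedModType R).

Lemma bounded_linear_continuous (f : X -> R) C : linear_functional f ->
  (forall x, `|f x| <= C * `|x|) -> cont_lin_functional f.
Proof.
move=> lf bf; split => // x; apply/cvgrPdist_lt => e e0.
have C1 : 0 < `|C| + 1 by rewrite ltr_wpDl.
apply/nbhs_ballP; exists (e / (`|C| + 1)) => /=; first by rewrite divr_gt0.
move=> y; rewrite -ball_normE /= => hy.
rewrite -linear_functionalB //; apply: le_lt_trans (bf _) _.
have : `|x - y| * (`|C| + 1) < e by rewrite -ltr_pdivlMr.
have : C * `|x - y| <= `|C| * `|x - y|.
  by rewrite ler_wpM2r // real_ler_norm ?num_real.
have := normr_ge0 (x - y); nra.
Qed.

Lemma cont_lin_functional_bounded (f : X -> R) : cont_lin_functional f ->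
  exists2 C, 0 <= C & forall x, `|f x| <= C * `|x|.
Proof.
move=> [lf cf].
have /cvgrPdist_lt /(_ 1 ltr01) /nbhs_ballP [d /= d0 hd] := cf 0.
exists (2 / d) => [|y]; first by rewrite divr_ge0 // ltW.
have [->|y0] := eqVneq y 0.
  by rewrite linear_functional0 // !normr0 mulr0.
have ny : 0 < `|y| by rewrite normr_gt0.
pose k := d / (2 * `|y|); have k0 : 0 < k by rewrite divr_gt0 // mulr_gt0.
have := hd (k *: y); rewrite -ball_normE /= sub0r normrN normrZ gtr0_norm //.
rewrite linear_functional0 // sub0r normrN linear_functionalZ //.
rewrite normrM gtr0_norm //.
have -> : k * `|y| = d / 2 by rewrite /k; field; rewrite gt_eqF.
move=> /(_ ltac:(lra)) h.
rewrite -(ler_pM2l k0) (_ : k * (2 / d * `|y|) = 1); first exact: ltW.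
by rewrite /k; field; rewrite !gt_eqF.
Qed.

Lemma linear_functional_norm_le (f : X -> R) C : linear_functional f ->
  (forall x, f x <= C * `|x|) -> forall x, `|f x| <= C * `|x|.
Proof.
move=> lf hf x; rewrite ler_norml hf andbT.
by have := hf (- x); rewrite normrN -scaleN1r linear_functionalZ //; lra.
Qed.

Lemma norming_functional (v : X) : exists f : X -> R,
  [/\ cont_lin_functional f, forall x, `|f x| <= `|x| & f v = `|v|].
Proof.
have normZ (a : R) (x : X) : 0 < a -> `|a *: x| <= a * `|x|.
  by move=> a0; rewrite normrZ gtr0_norm.
have [f [lf fn fv]] := hahn_banach_at (normr0 X) (@ler_normD _ X) normZ v.
have fn1 : forall x, `|f x| <= 1 * `|x|.
  by apply: linear_functional_norm_le => // x; rewrite mul1r.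
exists f; split => [|x|//]; first exact: bounded_linear_continuous fn1.
by rewrite -[`|x|]mul1r.
Qed.

End ContinuousFunctionals.

Section Gauge.
Variables (R : realType) (X : normedModType R) (K : set X) (r : R).
Hypothesis K0 : K 0.
Hypothesis Kconv : forall a x y, 0 <= a -> a <= 1 -> K x -> K y ->
  K (a *: x + (1 - a) *: y).
Hypothesis r0 : 0 < r.

(* [y] lies in [l] times the closed [r]-neighbourhood of [K]: [gauge] is the
   Minkowski functional of that neighbourhood. *)
Definition gauge_set (y : X) :=
  [set l : R | 0 <= l /\ exists2 k, K k & `|y - l *: k| <= l * r].

Definition gauge (y : X) := inf (gauge_set y).

Lemma gauge_set_norm y : gauge_set y (`|y| / r).
Proof.
split; first by rewrite divr_ge0 // ltW.
by exists 0; rewrite // scaler0 subr0 divfK ?gt_eqF.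
Qed.

Lemma gauge_le y l : gauge_set y l -> gauge y <= l.
Proof. by apply: ge_inf; exists 0 => ? []. Qed.

Lemma le_gauge y m : (forall l, gauge_set y l -> m <= l) -> m <= gauge y.
Proof.
by move=> ml; apply: lb_le_inf => //; exists (`|y| / r); apply: gauge_set_norm.
Qed.

Lemma gauge_le_norm y : gauge y <= `|y| / r.
Proof. exact/gauge_le/gauge_set_norm. Qed.

Lemma gauge0 : gauge 0 = 0.
Proof.
apply/eqP; rewrite eq_le; apply/andP; split; last by apply: le_gauge => l [].
by apply: le_trans (gauge_le_norm 0) _; rewrite normr0 mul0r.
Qed.

Lemma gauge_setZ a y l : 0 < a -> gauge_set y l -> gauge_set (a *: y) (a * l).
Proof.
move=> a0 [l0 [k Kk yk]]; split; first by rewrite mulr_ge0 // ltW.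
exists k => //; rewrite -scalerA -scalerBr normrZ gtr0_norm // -mulrA.
by rewrite ler_pM2l.
Qed.

Lemma gauge_setD y1 y2 l1 l2 : gauge_set y1 l1 -> gauge_set y2 l2 ->
  gauge_set (y1 + y2) (l1 + l2).
Proof.
move=> [l10 [k1 K1 h1]] [l20 [k2 K2 h2]]; split; first by rewrite addr_ge0.
have [k Kk ek] : exists2 k, K k & (l1 + l2) *: k = l1 *: k1 + l2 *: k2.
  have [l0|lpos] := eqVneq (l1 + l2) 0.
    have [-> ->] : l1 = 0 /\ l2 = 0 by split; lra.
    by exists 0 => //; rewrite scaler0 !scale0r addr0.
  pose a := l1 / (l1 + l2).
  have a0 : 0 <= a by rewrite divr_ge0 // addr_ge0.
  have a1 : a <= 1 by rewrite ler_pdivrMr ?mul1r ?lerDl // lt_def lpos addr_ge0.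
  exists (a *: k1 + (1 - a) *: k2); first exact: Kconv.
  rewrite scalerDr !scalerA; congr (_ *: _ + _ *: _); rewrite /a; field => //.
exists k => //; rewrite ek opprD addrACA mulrDl.
by apply: le_trans (ler_normD _ _) _; apply: lerD.
Qed.

Lemma gaugeZ a y : 0 < a -> gauge (a *: y) <= a * gauge y.
Proof.
move=> a0; rewrite -ler_pdivrMl //; apply: le_gauge => l yl.
by rewrite ler_pdivrMl //; apply/gauge_le/gauge_setZ.
Qed.

Lemma gaugeD y1 y2 : gauge (y1 + y2) <= gauge y1 + gauge y2.
Proof.
rewrite -lerBlDr; apply: le_gauge => l1 S1; rewrite lerBlDr -lerBlDl.
apply: le_gauge => l2 S2; rewrite lerBlDl.
exact/gauge_le/gauge_setD.
Qed.

Lemma gauge_le1 k z : K k -> `|z| <= r -> gauge (k + z) <= 1.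
Proof.
move=> Kk zr; apply: gauge_le; split => //; exists k => //.
by rewrite scale1r addrAC subrr add0r mul1r.
Qed.

Lemma gauge_ge1 y : (forall k, K k -> r <= `|y - k|) -> 1 <= gauge y.
Proof.
move=> far; apply: le_gauge => l [l0 [k Kk yk]].
rewrite leNgt; apply/negP => l1.
have /far : K (l *: k).
  rewrite -[_ *: k]addr0 -(scaler0 _ (1 - l)).
  by apply: Kconv => //; apply: ltW.
have : 0 < (1 - l) * r by rewrite mulr_gt0 // subr_gt0.
lra.
Qed.

End Gauge.

Section Convexity.
Variables (R : numDomainType) (V : lmodType R).

Lemma convex_set_comb (U : set (convex_lmodType V)) a x y : convex_set U ->
  0 <= a -> a <= 1 -> U x -> U y -> U (a *: x + (1 - a) *: y).
Proof.
move=> cU a0 a1 Ux Uy.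
by have /set_mem := cU x y (Itv01 a0 a1) (mem_set Ux) (mem_set Uy).
Qed.

Lemma convex_set_bigcup_directed T (F_ : T -> set (convex_lmodType V)) :
  (forall t, convex_set (F_ t)) ->
  (forall t1 t2, exists t3, F_ t1 `|` F_ t2 `<=` F_ t3) ->
  convex_set (\bigcup_(t in [set: T]) F_ t).
Proof.
move=> cF dir x y l /set_mem [s _ xs] /set_mem [t _ yt].
have [u st] := dir s t; apply/mem_set; exists u => //; apply/set_mem/cF.
- by apply/mem_set/st; left.
- by apply/mem_set/st; right.
Qed.

End Convexity.

Section Separation.
Variables (R : realType) (X : normedModType R).

Lemma separate_point_convex (U : set X) d r :
  convex_set (U : set (convex_lmodType X)) -> U !=set0 -> 0 < r ->
  (forall u, U u -> r <= `|d - u|) ->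
  exists f eps, [/\ cont_lin_functional f, 0 < eps &
    forall u, U u -> f u <= f d - eps].
Proof.
move=> cU [u0 Uu0] r0 far; pose K := [set k | U (u0 + k)].
have K0 : K 0 by rewrite /K /= addr0.
have Kconv a k1 k2 : 0 <= a -> a <= 1 -> K k1 -> K k2 ->
    K (a *: k1 + (1 - a) *: k2).
  move=> a0 a1 K1 K2; rewrite /K /=.
  have -> : u0 + (a *: k1 + (1 - a) *: k2) =
      a *: (u0 + k1) + (1 - a) *: (u0 + k2).
    by rewrite !scalerDr addrACA -scalerDl [a + _]addrC subrK scale1r.
  exact: convex_set_comb.
have [f [lf fq fv]] := hahn_banach_at (gauge0 K0 r0) (gaugeD K0 Kconv r0)
  (gaugeZ K0 r0) (d - u0).
have q1 : 1 <= gauge K r (d - u0).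
  by apply: gauge_ge1 => // k Kk; rewrite -addrA -opprD; apply: far.
have du0 : 0 < `|d - u0|.
  rewrite normr_gt0 subr_eq0; apply/eqP => du.
  by have := far _ Uu0; rewrite du subrr normr0; lra.
have eps0 : 0 < r / `|d - u0| by rewrite divr_gt0.
exists f, (r / `|d - u0|); split => // [|u Uu].
  apply: (@bounded_linear_continuous _ _ _ r^-1) => //.
  apply: linear_functional_norm_le => // x; rewrite mulrC.
  exact: le_trans (fq x) (gauge_le_norm K0 r0 x).
have Ku : K (u - u0) by rewrite /K /= addrC subrK.
have ze : `|r / `|d - u0| *: (d - u0)| <= r.
  by rewrite normrZ gtr0_norm ?divfK ?gt_eqF.
have := le_trans (fq _) (gauge_le1 Ku ze).
set e := r / `|d - u0|.
have -> : f (u - u0 + e *: (d - u0)) = f u - f u0 + e * (f d - f u0).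
  by rewrite (linear_functionalD _ _ lf) (linear_functionalZ _ _ lf)
    !(linear_functionalB _ _ lf).
have Q1 : 1 <= f d - f u0 by rewrite -linear_functionalB // fv.
have : e <= e * (f d - f u0) by rewrite ler_peMr // ltW.
lra.
Qed.

End Separation.

Lemma ultra_cvg_bounded (R : realType) T (G : set_system T) (u : T -> R) M :
  UltraFilter G -> G [set t | `|u t| <= M] -> exists l : R, u @ G --> l.
Proof.
move=> GU uM; have uMG : (u @ G) [set` `[- M, M]].
  apply: (@filterS _ _ _ [set t | `|u t| <= M]) uM => t /= ut.
  by rewrite in_itv /= -ler_norml.
have [l [_ cl]] := segment_compact _ uMG.
exists l => B /= Bl; have [//|GnB] := in_ultra_setVsetC (u @^-1` B) GU.
by have [y [/= nBy By]] := cl (~` B) B GnB Bl.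
Qed.

Section WeakConvergence.
Variables (R : realType) (X : normedModType R).

Definition weak_cvg_to T (G : set_system T) (u : T -> X) (d : X) :=
  forall f, cont_lin_functional f -> (f \o u) @ G --> f d.

Lemma reflexive_weak_cvg T (G : set_system T) (u : T -> X) B :
  @reflexive_space R X -> UltraFilter G -> G [set t | `|u t| <= B] ->
  exists d, weak_cvg_to G u d.
Proof.
move=> refl GU uB; pose phi (h : X -> R) := lim ((h \o u) @ G).
have cvg_phi h : cont_lin_functional h -> (h \o u) @ G --> phi h.
  move=> ch; have [C C0 hC] := cont_lin_functional_bounded ch.
  have [|l hl] := @ultra_cvg_bounded _ _ _ (h \o u) (C * B) GU.
    apply: filterS uB => t /= ut.
    by apply: le_trans (hC _) _; rewrite ler_wpM2l.
  by rewrite /phi (cvg_lim _ hl).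
have lin : dual_linear phi.
  move=> a f g cf cg; rewrite /phi.
  have -> : (fun x => a * f x + g x) \o u =
    (fun=> a) \* (f \o u) + (g \o u) by [].
  exact: cvg_lim (cvgD (cvgM (cvg_cst a) (cvg_phi f cf)) (cvg_phi g cg)).
have bnd : dual_bounded phi.
  exists B => f cf C C0 hC; have hl := cvg_phi f cf.
  have fB : G [set t | `|f (u t)| <= B * C].
    apply: filterS uB => t /= ut; apply: le_trans (hC _) _.
    by rewrite [B * C]mulrC ler_wpM2l.
  rewrite ler_norml; apply/andP; split.
    apply: cvgr_to_ge hl _; apply: filterS fB => t /=.
    by rewrite ler_norml => /andP[].
  apply: cvgr_to_le hl _; apply: filterS fB => t /=.
  by rewrite ler_norml => /andP[].
have [d hd] := refl phi lin bnd.
by exists d => f cf; rewrite -hd //; apply: cvg_phi.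
Qed.

Lemma weak_cvg_dist_le T (G : set_system T) (u : T -> X) d c M :
  ProperFilter G -> weak_cvg_to G u d -> G [set t | `|u t - c| <= M] ->
  `|d - c| <= M.
Proof.
move=> GP ud ucM; have [n [cn n1 ndc]] := norming_functional (d - c).
rewrite -ndc linear_functionalB //; last by case: cn.
apply: cvgr_to_le (cvgB (ud n cn) (cvg_cst (n c))) _.
apply: filterS ucM => t utc.
rewrite !fctE -linear_functionalB; last by case: cn.
exact: le_trans (ler_norm _) (le_trans (n1 _) utc).
Qed.

Lemma not_closure_dist_ge (U : set X) d : ~ closure U d ->
  exists2 r, 0 < r & forall u, U u -> r <= `|d - u|.
Proof.
move=> nUd; apply: contrapT => nr; apply: nUd => A /nbhs_ballP [r r0 rA].
apply: contrapT => nUA; apply: nr; exists r => // u Uu.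
rewrite leNgt; apply/negP => du; apply: nUA; exists u; split => //.
by apply: rA; rewrite -ball_normE.
Qed.

Lemma weak_cvg_closure T (G : set_system T) (u : T -> X) d (U : set X) :
  ProperFilter G -> weak_cvg_to G u d ->
  convex_set (U : set (convex_lmodType X)) -> G [set t | U (u t)] ->
  closure U d.
Proof.
move=> GP ud cU GU; apply: contrapT => /not_closure_dist_ge [r r0 far].
have [|f [eps [cf eps0 fU]]] := separate_point_convex cU _ r0 far.
  by have [t Ut] := filter_ex GU; exists (u t).
have : f d <= f d - eps.
  by apply: cvgr_to_le (ud f cf) _; apply: filterS GU => t /fU.
lra.
Qed.

End WeakConvergence.

Lemma closure_dist_le (R : realType) (X : normedModType R) (U : set X) d x :
  (forall c, U c -> `|d - c| <= `|x - c|) ->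
  forall c, closure U c -> `|d - c| <= `|x - c|.
Proof.
move=> Ud c Uc; apply/ler_addgt0Pr => e e0.
have e2 : 0 < e / 2 by rewrite divr_gt0.
have [u [Uu cu]] := Uc _ (nbhsx_ballx c (e / 2) e2).
move: cu; rewrite -ball_normE /= => cu; have := Ud u Uu.
have := ler_distD u d c; have := ler_distD c x u; rewrite (distrC u c); lra.
Qed.

Lemma directed_tail_filter T A (F_ : T -> set A) : inhabited T ->
  (forall t1 t2, exists t3, F_ t1 `|` F_ t2 `<=` F_ t3) ->
  ProperFilter (filter_from [set: T] (fun s => [set t | F_ s `<=` F_ t])).
Proof.
move=> [t0] dir; apply: filter_from_proper => [|s _]; last by exists s.
apply: filter_from_filter; first by exists t0.
move=> i j _ _; have [k ijk] := dir i j; exists k => // t /= kt.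
by split => y ?; apply/kt/ijk; [left | right].
Qed.

Theorem lemma13 (R : realType) (X : completeNormedModType R)
  (T : Type) (F_ : T -> set X) :
  @reflexive_space R X ->
  inhabited T ->
  (forall t, convex_set (F_ t : set (convex_lmodType X))) ->
  (forall t, existence_set (F_ t)) ->
  (forall t1 t2, exists t3, F_ t1 `|` F_ t2 `<=` F_ t3) ->
  existence_set (closure (\bigcup_(t in [set: T]) F_ t)).
Proof.
move=> refl [t0] cvx ex dir.
have [[c0 F_c0] _] := ex t0.
split; first by exists c0; apply: subset_closure; exists t0.
move=> x; have [dx RFdx] := choice (fun t => (ex t).2 x).
have [G [GU tailG]] :=
  ultraFilterLemma (directed_tail_filter (inhabits t0) dir).
have GP : ProperFilter G by apply: ultra_proper.
have tail s : G [set t | F_ s `<=` F_ t] by apply: tailG; exists s.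
have near_RF s c : F_ s c -> G [set t | `|dx t - c| <= `|x - c|].
  by move=> Fsc; apply: filterS (tail s) => t st; apply: (RFdx t).2 (st _ Fsc).
have [|d dxd] := reflexive_weak_cvg (u := dx) (B := `|x - c0| + `|c0|) refl GU.
  apply: filterS (near_RF t0 c0 F_c0) => t /=.
  by have := ler_normD (dx t - c0) c0; rewrite subrK; lra.
exists d; split.
- apply: weak_cvg_closure dxd (convex_set_bigcup_directed cvx dir) _.
  by apply: filterE => t; exists t => //; apply: (RFdx t).1.
- apply: closure_dist_le => c [s _ Fsc].
  exact: weak_cvg_dist_le dxd (near_RF s c Fsc).
Qed.
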